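(* For $\mathbf{x}=(x_0,x_1,x_2),\ \mathbf{y}=(y_0,y_1,y_2)\in\mathbb{R}^3$ let $\langle\mathbf{x},\mathbf{y}\rangle:=x_0y_0-x_1y_1-x_2y_2$. For parameters $\alpha,\beta$ set $q=\alpha-\beta$ and define $$\hat k(\mathbf{x},\mathbf{y},q)=\frac{\langle\mathbf{x},\mathbf{x}\rangle-\langle\mathbf{y},\mathbf{y}\rangle+q^2}{\langle\mathbf{x}+\mathbf{y},\mathbf{x}+\mathbf{y}\rangle+q^2},\qquad \hat{\mathbf{r}}(\mathbf{x},\mathbf{y},q)=\frac{(x_1y_2-x_2y_1,\ x_0y_2-x_2y_0,\ x_1y_0-x_0y_1)}{\langle\mathbf{x}+\mathbf{y},\mathbf{x}+\mathbf{y}\rangle+q^2}.$$ Define $\hat{\mathbf{R}}_{\alpha,\beta}:(\mathbf{x},\mathbf{y})\mapsto(\mathbf{u},\mathbf{v})$ by $$\mathbf{u}=\hat k(\mathbf{x},\mathbf{y},q)\,\mathbf{x}+\big(1-\hat k(\mathbf{y},\mathbf{x},q)\big)\mathbf{y}+2q\,\hat{\mathbf{r}}(\mathbf{x},\mathbf{y},q),$$ $$\mathbf{v}=\big(1-\hat k(\mathbf{x},\mathbf{y},q)\big)\mathbf{x}+\hat k(\mathbf{y},\mathbf{x},q)\,\mathbf{y}-2q\,\hat{\mathbf{r}}(\mathbf{x},\mathbf{y},q).$$ Then $\hat{\mathbf{R}}_{\alpha,\beta}$ is a parametric quadrirational Yang--Baxter map which satisfies the invariant conditions $$\mathbf{u}+\mathbf{v}=\mathbf{x}+\mathbf{y},\quad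 \langle\mathbf{u},\mathbf{u}\rangle=\langle\mathbf{x},\mathbf{x}\rangle,\quad \langle\mathbf{v},\mathbf{v}\rangle=\langle\mathbf{y},\mathbf{y}\rangle,$$ and admits a Lax representation $\mathbf{L}(\mathbf{u},\alpha,\zeta)\mathbf{L}(\mathbf{v},\beta,\zeta)=\mathbf{L}(\mathbf{y},\beta,\zeta)\mathbf{L}(\mathbf{x},\alpha,\zeta)$ with Lax matrix $$\mathbf{L}(\mathbf{x},\alpha,\zeta)=\begin{pmatrix}\zeta+i(x_2-\alpha) & x_0+x_1\\ x_0-x_1 & \zeta-i(x_2+\alpha)\end{pmatrix}.$$
   Context: A parametric Yang--Baxter map is a family of maps $R_{\alpha,\beta}:\mathcal{X}\times\mathcal{X}\to\mathcal{X}\times\mathcal{X}$, $R_{\alpha,\beta}(x,y)=(u(x,\alpha,y,\beta),v(x,\alpha,y,\beta))$, such that the map $((x,\alpha),(y,\beta))\mapsto((u,\alpha),(v,\beta))$ on $(\mathcal{X}\times\mathcal{I})^2$ satisfies the set-theoretical Yang--Baxter equation $R_{23}\circ R_{13}\circ R_{12}=R_{12}\circ R_{13}\circ R_{23}$, where $R_{ij}$ denotes the action of the map on the $i$-th and $j$-th factors of a triple product (e.g. $R_{13}(x,y,z)=(u(x,z),y,v(x,z))$). Equivalently, $R^{23}_{\beta,\gamma}\circ R^{13}_{\alpha,\gamma}\circ R^{12}_{\alpha,\beta}=R^{12}_{\alpha,\beta}\circ R^{13}_{\alpha,\gamma}\circ R^{23}_{\beta,\gamma}$. It is quadrirational if for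 fixed $y$ and fixed $x$ the maps $u(\cdot,y)$ and $v(x,\cdot)$ are birational isomorphisms of $\mathcal{X}$. Here $\mathcal{X}=\mathbb{R}^3$ and maps are understood generically, where defined; $i=\sqrt{-1}$ and $\zeta\in\mathbb{C}$ is a spectral parameter. *)

From HB Require Import structures.
From mathcomp Require Import all_boot all_order all_algebra.
From mathcomp Require Import complex.
From mathcomp Require Import mpoly.
Set Implicit Arguments. Unset Strict Implicit. Unset Printing Implicit Defensive.
Import Order.TTheory GRing.Theory Num.Theory.
Local Open Scope ring_scope.

Section Defs.
Variable R : rcfType.

Definition vec := 'rV[R]_3.
Definition co (x : vec) (i : 'I_3) : R := x ord0 i.
Definition mkvec (a b c : R) : vec :=
  \row_(i < 3) (if i == 0 :> nat then a else if i == 1 :> nat then b else c).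

Definition mink (x y : vec) : R :=
  co x 0 * co y 0 - co x 1 * co y 1 - co x 2 * co y 2.

Definition den (x y : vec) (q : R) : R := mink (x + y) (x + y) + q ^+ 2.

Definition khat (x y : vec) (q : R) : R :=
  (mink x x - mink y y + q ^+ 2) / den x y q.

Definition rhat (x y : vec) (q : R) : vec :=
  (den x y q)^-1 *: mkvec (co x 1 * co y 2 - co x 2 * co y 1)
                          (co x 0 * co y 2 - co x 2 * co y 0)
                          (co x 1 * co y 0 - co x 0 * co y 1).

Definition Ru (a b : R) (x y : vec) : vec :=
  let q := a - b in
  khat x y q *: x + (1 - khat y x q) *: y + (2 * q) *: rhat x y q.

Definition Rv (a b : R) (x y : vec) : vec :=
  let q := a - b in
  (1 - khat x y q) *: x + khat y x q *: y - (2 * q) *: rhat x y q.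

Definition Rhat (a b : R) (xy : vec * vec) : vec * vec :=
  (Ru a b xy.1 xy.2, Rv a b xy.1 xy.2).

Definition Rdef (a b : R) (xy : vec * vec) : Prop := den xy.1 xy.2 (a - b) != 0.

(* Yang--Baxter equation R23 o R13 o R12 = R12 o R13 o R23 (with parameters),
   understood where both sides are defined (every intermediate step defined). *)
Definition YB_where_defined : Prop :=
  forall (a b c : R) (x y z : vec),
    let (x1, y1) := Rhat a b (x, y) in
    let (x2, z1) := Rhat a c (x1, z) in
    let (y2, z2) := Rhat b c (y1, z1) in
    let (y1', z1') := Rhat b c (y, z) in
    let (x1', z2') := Rhat a c (x, z1') in
    let (x2', y2') := Rhat a b (x1', y1') in
    Rdef a b (x, y) -> Rdef a c (x1, z) -> Rdef b c (y1, z1) ->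
    Rdef b c (y, z) -> Rdef a c (x, z1') -> Rdef a b (x1', y1') ->
    (x2, y2, z2) = (x2', y2', z2').

Definition ptv (x : vec) : 'I_3 -> R := fun i => co x i.

Record ratmap := RatMap { rnum : 'I_3 -> {mpoly R[3]}; rden : 'I_3 -> {mpoly R[3]} }.

Definition ratdef (F : ratmap) (x : vec) : Prop :=
  forall i, (rden F i).@[ptv x] != 0.

Definition rateval (F : ratmap) (x : vec) : vec :=
  \row_(i < 3) ((rnum F i).@[ptv x] / (rden F i).@[ptv x]).

(* f : R^3 -> R^3 (a total function, meaningful where defined) is a
   birational isomorphism of R^3: it agrees on a nonempty Zariski open set
   with a rational map F having a rational inverse G, i.e. G o F = id and
   F o G = id on nonempty Zariski open sets (complements of hypersurfaces
   h = 0 with h a nonzero polynomial). *)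
Definition birational (f : vec -> vec) : Prop :=
  exists (F G : ratmap) (h1 h2 : {mpoly R[3]}),
    h1 != 0 /\ h2 != 0 /\
    (forall x, h1.@[ptv x] != 0 ->
       [/\ ratdef F x, rateval F x = f x, ratdef G (f x) & rateval G (f x) = x]) /\
    (forall w, h2.@[ptv w] != 0 ->
       [/\ ratdef G w, ratdef F (rateval G w) & rateval F (rateval G w) = w]).

Definition quadrirational : Prop :=
  forall a b : R,
    (forall y : vec, birational (fun x => Ru a b x y)) /\
    (forall x : vec, birational (fun y => Rv a b x y)).

Definition Lax (x : vec) (a : R) (zeta : R[i]) : 'M[R[i]]_2 :=
  \matrix_(i < 2, j < 2)
    (if i == 0 :> nat then
       (if j == 0 :> nat then zeta + (Complex 0 1) * ((co x 2 - a)%:C)%C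
        else ((co x 0 + co x 1)%:C)%C)
     else
       (if j == 0 :> nat then ((co x 0 - co x 1)%:C)%C
        else zeta - (Complex 0 1) * ((co x 2 + a)%:C)%C)).

End Defs.

From HB Require Import structures.
From mathcomp Require Import all_boot all_order all_algebra.
From mathcomp Require Import complex mpoly ring lra.
Set Implicit Arguments. Unset Strict Implicit. Unset Printing Implicit Defensive.
Import GRing.Theory Num.Theory.
Local Open Scope ring_scope.

(* Write [lax0 x] for the traceless part of the Lax matrix, so that
   L(x, a, zeta) = (zeta - i a) + lax0 x and (lax0 x)^2 = <x, x>.  The map is a
   refactorisation: with S := lax0 x + lax0 y + i (a - b), whose product with
   lax0 (x + y) - i (a - b) is the scalar <x+y, x+y> + (a - b)^2, one has
   lax0 u * S = S * lax0 x and lax0 v * S = S * lax0 y.  So u and v are the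
   conjugates of x and y by S; this gives the invariants and the Lax equation.
   For the Yang--Baxter equation, both sides conjugate x (and z) by products of
   two such matrices S, and these products agree by a linear identity between
   refactorisation relations.  Finally x |-> u(x, y) is inverted by
   u |-> u(u, -y), with explicit polynomial denominators. *)

Lemma intertwine_mulmx (T : pzRingType) n (X X1 X2 S1 S2 : 'M[T]_n) :
  X1 *m S1 = S1 *m X -> X2 *m S2 = S2 *m X1 -> X2 *m (S2 *m S1) = (S2 *m S1) *m X.
Proof. by move=> eq1 eq2; rewrite mulmxA eq2 -mulmxA eq1 mulmxA. Qed.

Lemma intertwine_mulmx_eq (T : pzRingType) n (X X1 X2 Y1 Y2 S1 S2 T1 T2 : 'M[T]_n) :
  X1 *m S1 = S1 *m X -> X2 *m S2 = S2 *m X1 ->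
  Y1 *m T1 = T1 *m X -> Y2 *m T2 = T2 *m Y1 ->
  S2 *m S1 = T2 *m T1 -> X2 *m (S2 *m S1) = Y2 *m (S2 *m S1).
Proof.
move=> eqX1 eqX2 eqY1 eqY2 eqS.
by rewrite (intertwine_mulmx eqX1 eqX2) eqS (intertwine_mulmx eqY1 eqY2).
Qed.

Section Matrix2.
Variable T : comNzRingType.
Implicit Types (a b c d e f g h : T) (A U V X Y Z : 'M[T]_2).

Definition mx2 a b c d : 'M[T]_2 :=
  \matrix_(i < 2, j < 2)
    (if i == 0 :> nat then (if j == 0 :> nat then a else b)
     else (if j == 0 :> nat then c else d)).

Lemma mx2E A : A = mx2 (A 0 0) (A 0 1) (A 1 0) (A 1 1).
Proof.
apply/matrixP => i j; rewrite mxE.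
by case: i => [[|[|//]]] Hi; case: j => [[|[|//]]] Hj /=; congr (A _ _); exact: val_inj.
Qed.

Lemma mulmx2 a b c d e f g h :
  mx2 a b c d *m mx2 e f g h =
  mx2 (a * e + b * g) (a * f + b * h) (c * e + d * g) (c * f + d * h).
Proof.
apply/matrixP => i j; rewrite !mxE !big_ord_recl big_ord0 !mxE /= addr0.
by case: i => [[|[|//]]] Hi; case: j => [[|[|//]]] Hj.
Qed.

Lemma addmx2 a b c d e f g h :
  mx2 a b c d + mx2 e f g h = mx2 (a + e) (b + f) (c + g) (d + h).
Proof.
apply/matrixP => i j; rewrite !mxE.
by case: i => [[|[|//]]] Hi; case: j => [[|[|//]]] Hj.
Qed.

Lemma oppmx2 a b c d : - mx2 a b c d = mx2 (- a) (- b) (- c) (- d).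
Proof.
apply/matrixP => i j; rewrite !mxE.
by case: i => [[|[|//]]] Hi; case: j => [[|[|//]]] Hj.
Qed.

Lemma scalar_mx2 a : a%:M = mx2 a 0 0 a.
Proof.
apply/matrixP => i j; rewrite !mxE.
by case: i => [[|[|//]]] Hi; case: j => [[|[|//]]] Hj.
Qed.

Lemma mx2_inj a b c d e f g h :
  mx2 a b c d = mx2 e f g h -> [/\ a = e, b = f, c = g & d = h].
Proof.
move=> eq_mx; have entry i j := congr1 (fun M : 'M[T]_2 => M i j) eq_mx.
by move: (entry 0 0) (entry 0 1) (entry 1 0) (entry 1 1); rewrite !mxE.
Qed.

Ltac mx2_ring := rewrite ?scalar_mx2 ?(addmx2, oppmx2, mulmx2); congr (mx2 _ _ _ _); ring.

Lemma lax_product_reduction U V X Y a b :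
  U + V = X + Y -> U *m (V + (b - a)%:M) = (Y + (b - a)%:M) *m X ->
  (a%:M + U) *m (b%:M + V) = (b%:M + Y) *m (a%:M + X).
Proof.
move=> /(canRL (addKr U)) -> eq_UV; apply/eqP; rewrite -subr_eq0.
have -> : (a%:M + U) *m (b%:M + (- U + (X + Y))) - (b%:M + Y) *m (a%:M + X)
    = U *m (- U + (X + Y) + (b - a)%:M) - (Y + (b - a)%:M) *m X.
  by rewrite (mx2E U) (mx2E X) (mx2E Y); mx2_ring.
by rewrite eq_UV subrr.
Qed.

Lemma intertwiner_swap_left U V X Y s :
  U + V = X + Y -> U *m (X + Y + s%:M) = (X + Y + s%:M) *m X -> U *m U = X *m X ->
  U *m (V + s%:M) = (Y + s%:M) *m X.
Proof.
move=> /(canRL (addKr U)) -> eq_S eq_sqr; apply/eqP; rewrite -subr_eq0.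
have -> : U *m (- U + (X + Y) + s%:M) - (Y + s%:M) *m X
    = (U *m (X + Y + s%:M) - (X + Y + s%:M) *m X) - (U *m U - X *m X).
  by rewrite (mx2E U) (mx2E X) (mx2E Y); mx2_ring.
by rewrite eq_S eq_sqr !subrr.
Qed.

Lemma intertwiner_swap_right U V X Y s :
  U + V = X + Y -> V *m (X + Y + s%:M) = (X + Y + s%:M) *m Y -> V *m V = Y *m Y ->
  (V - s%:M) *m U = X *m (Y - s%:M).
Proof.
move=> /(canRL (addrK V)) -> eq_S eq_sqr; apply/eqP; rewrite -subr_eq0.
have -> : (V - s%:M) *m (X + Y - V) - X *m (Y - s%:M)
    = (V *m (X + Y + s%:M) - (X + Y + s%:M) *m Y) - (V *m V - Y *m Y).
  by rewrite (mx2E V) (mx2E X) (mx2E Y); mx2_ring.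
by rewrite eq_S eq_sqr !subrr.
Qed.

Lemma yb_intertwiners_left X Y Z X1 X1' Y1' Z1' p r :
  Y1' + Z1' = Y + Z ->
  X1 *m (X + Y + p%:M) = (X + Y + p%:M) *m X ->
  X1' *m (X + Z1' + r%:M) = (X + Z1' + r%:M) *m X ->
  Y1' *m (Z1' + (r - p)%:M) = (Z + (r - p)%:M) *m Y ->
  (X1 + Z + r%:M) *m (X + Y + p%:M) = (X1' + Y1' + p%:M) *m (X + Z1' + r%:M).
Proof.
move=> /(canRL (addKr Y1')) -> eq1 eq2 eq3; apply/eqP; rewrite eq_sym -subr_eq0.
set Z1 := - Y1' + (Y + Z).
have -> : (X1' + Y1' + p%:M) *m (X + Z1 + r%:M) - (X1 + Z + r%:M) *m (X + Y + p%:M)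
    = (X1' *m (X + Z1 + r%:M) - (X + Z1 + r%:M) *m X)
      - (X1 *m (X + Y + p%:M) - (X + Y + p%:M) *m X)
      + (Y1' *m (Z1 + (r - p)%:M) - (Z + (r - p)%:M) *m Y).
  by rewrite /Z1 (mx2E X) (mx2E Y) (mx2E Z) (mx2E X1) (mx2E X1') (mx2E Y1'); mx2_ring.
by rewrite eq1 eq2 eq3 !subrr ?addr0.
Qed.

Lemma yb_intertwiners_right X Y Z X1 Y1 Z1 Z1' p r :
  X1 + Y1 = X + Y ->
  Z1 *m (X1 + Z + r%:M) = (X1 + Z + r%:M) *m Z ->
  Z1' *m (Y + Z + (r - p)%:M) = (Y + Z + (r - p)%:M) *m Z ->
  (Y1 - p%:M) *m X1 = X *m (Y - p%:M) ->
  (Y1 + Z1 + (r - p)%:M) *m (X1 + Z + r%:M) = (X + Z1' + r%:M) *m (Y + Z + (r - p)%:M).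
Proof.
move=> /(canRL (addKr X1)) -> eq1 eq2 eq3; apply/eqP; rewrite -subr_eq0.
set Y2 := - X1 + (X + Y).
have -> : (Y2 + Z1 + (r - p)%:M) *m (X1 + Z + r%:M) - (X + Z1' + r%:M) *m (Y + Z + (r - p)%:M)
    = (Z1 *m (X1 + Z + r%:M) - (X1 + Z + r%:M) *m Z)
      - (Z1' *m (Y + Z + (r - p)%:M) - (Y + Z + (r - p)%:M) *m Z)
      + ((Y2 - p%:M) *m X1 - X *m (Y - p%:M)).
  by rewrite /Y2 (mx2E X) (mx2E Y) (mx2E Z) (mx2E X1) (mx2E Z1) (mx2E Z1'); mx2_ring.
by rewrite eq1 eq2 eq3 !subrr ?addr0.
Qed.

End Matrix2.

(* The formulas of the map over an arbitrary commutative ring, so that they can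
   also be read as polynomials in {mpoly R[3]}; over R they are convertible to
   [mink], [den] and [rhat]. *)
Section GenericFormulas.
Variable T : comNzRingType.
Implicit Types (x y : 'rV[T]_3) (q : T).

Definition mink_gen x y : T :=
  x ord0 0 * y ord0 0 - x ord0 1 * y ord0 1 - x ord0 2 * y ord0 2.

Definition den_gen x y q : T := mink_gen (x + y) (x + y) + q ^+ 2.

Definition cross_gen x y : 'rV[T]_3 :=
  \row_(i < 3) (if i == 0 :> nat then x ord0 1 * y ord0 2 - x ord0 2 * y ord0 1
                else if i == 1 :> nat then x ord0 0 * y ord0 2 - x ord0 2 * y ord0 0
                else x ord0 1 * y ord0 0 - x ord0 0 * y ord0 1).

Definition numRu_gen x y q : 'rV[T]_3 :=
  (mink_gen x x - mink_gen y y + q ^+ 2) *: x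
  + (den_gen x y q - mink_gen y y + mink_gen x x - q ^+ 2) *: y
  + (2 * q) *: cross_gen x y.

Definition den_inv_gen x y q : T :=
  (mink_gen x x - mink_gen y y - q ^+ 2) ^+ 2 + 4 * q ^+ 2 * mink_gen x x.

End GenericFormulas.

Section MorphFormulas.
Variables (T T' : comNzRingType) (f : {rmorphism T -> T'}).
Implicit Types (x y : 'rV[T]_3) (q : T).

Lemma rmorph_mink_gen x y : f (mink_gen x y) = mink_gen (map_mx f x) (map_mx f y).
Proof. by rewrite /mink_gen !mxE !(rmorphB, rmorphM). Qed.

Lemma rmorph_den_gen x y q : f (den_gen x y q) = den_gen (map_mx f x) (map_mx f y) (f q).
Proof. by rewrite /den_gen rmorphD rmorphXn rmorph_mink_gen map_mxD. Qed.

Lemma map_cross_gen x y : map_mx f (cross_gen x y) = cross_gen (map_mx f x) (map_mx f y).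
Proof.
apply/rowP => i; rewrite !mxE.
by case: ifP => _; [|case: ifP => _]; rewrite !(rmorphB, rmorphM).
Qed.

Lemma map_numRu_gen x y q :
  map_mx f (numRu_gen x y q) = numRu_gen (map_mx f x) (map_mx f y) (f q).
Proof.
rewrite /numRu_gen !map_mxD !map_mxZ map_cross_gen; congr (_ *: _ + _ *: _ + _ *: _).
- by rewrite rmorphD rmorphB rmorphXn !rmorph_mink_gen.
- by rewrite rmorphB rmorphD rmorphB rmorphXn rmorph_den_gen !rmorph_mink_gen.
- by rewrite rmorphM rmorph_nat.
Qed.

Lemma rmorph_den_inv_gen x y q :
  f (den_inv_gen x y q) = den_inv_gen (map_mx f x) (map_mx f y) (f q).
Proof.
rewrite /den_inv_gen rmorphD rmorphXn rmorphB rmorphB rmorphXn.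
by rewrite rmorphM rmorphM rmorph_nat rmorphXn !rmorph_mink_gen.
Qed.

End MorphFormulas.

Section Refactorisation.
Variable R : rcfType.
Local Notation C := R[i].
Implicit Types (a b q : R) (x y : vec R).

Lemma coD x y i : co (x + y) i = co x i + co y i. Proof. by rewrite /co mxE. Qed.
Lemma coN x i : co (- x) i = - co x i. Proof. by rewrite /co mxE. Qed.
Lemma coZ q x i : co (q *: x) i = q * co x i. Proof. by rewrite /co mxE. Qed.
Lemma co_mkvec0 (c0 c1 c2 : R) : co (mkvec c0 c1 c2) 0 = c0. Proof. by rewrite /co mxE. Qed.
Lemma co_mkvec1 (c0 c1 c2 : R) : co (mkvec c0 c1 c2) 1 = c1. Proof. by rewrite /co mxE. Qed.
Lemma co_mkvec2 (c0 c1 c2 : R) : co (mkvec c0 c1 c2) 2 = c2. Proof. by rewrite /co mxE. Qed.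

Lemma vecP x y : co x 0 = co y 0 -> co x 1 = co y 1 -> co x 2 = co y 2 -> x = y.
Proof.
move=> eq0 eq1 eq2; apply/rowP => -[[|[|[|//]]] lt_i3].
- by rewrite (_ : Ordinal lt_i3 = 0) //; exact: val_inj.
- by rewrite (_ : Ordinal lt_i3 = 1) //; exact: val_inj.
- by rewrite (_ : Ordinal lt_i3 = 2) //; exact: val_inj.
Qed.

Ltac unfold_map := rewrite /Ru /Rv /rhat /khat /den /mink /=
  ?(coD, coN, coZ, co_mkvec0, co_mkvec1, co_mkvec2).

Definition lax0 x : 'M[C]_2 :=
  mx2 (Complex 0 (co x 2)) (Complex (co x 0 + co x 1) 0)
      (Complex (co x 0 - co x 1) 0) (Complex 0 (- co x 2)).

Definition intertwiner x y q : 'M[C]_2 := lax0 x + lax0 y + (Complex 0 q)%:M.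

Ltac lax_expand := rewrite /intertwiner /lax0 ?scalar_mx2 ?(addmx2, oppmx2, mulmx2);
  congr (mx2 _ _ _ _); simpc; congr Complex; rewrite ?(coD, coN).

Lemma Lax_lax0 x a (zeta : C) : Lax x a zeta = (zeta - Complex 0 a)%:M + lax0 x.
Proof.
rewrite -[Lax x a zeta]/(mx2 _ _ _ _); case: zeta => z1 z2.
by lax_expand; ring.
Qed.

Lemma lax0D x y : lax0 (x + y) = lax0 x + lax0 y.
Proof. by lax_expand; ring. Qed.

Lemma lax0_inj : injective lax0.
Proof.
move=> x y /mx2_inj[[eq2] [eq_sum] [eq_diff] _].
by apply: vecP => //; lra.
Qed.

Lemma lax0_sqr x : lax0 x *m lax0 x = ((mink x x)%:C)%C%:M.
Proof. by rewrite /mink; lax_expand; ring. Qed.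

Lemma intertwinerC x y q : intertwiner x y q = intertwiner y x q.
Proof. by rewrite /intertwiner [lax0 x + _]addrC. Qed.

Lemma intertwiner_conj x y q :
  intertwiner x y q *m (lax0 (x + y) - (Complex 0 q)%:M) = ((den x y q)%:C)%C%:M.
Proof. by rewrite /den /mink; lax_expand; ring. Qed.

Lemma intertwiner_cancel x y q (U V : 'M[C]_2) : den x y q != 0 ->
  U *m intertwiner x y q = V *m intertwiner x y q -> U = V.
Proof.
move=> den_neq0 /(congr1 (mulmx^~ (lax0 (x + y) - (Complex 0 q)%:M))).
rewrite -!mulmxA intertwiner_conj !mul_mx_scalar; apply: scalerI.
by rewrite eq_complex /= eqxx andbT.
Qed.

Lemma Ru_intertwine a b x y : den x y (a - b) != 0 ->
  lax0 (Ru a b x y) *m intertwiner x y (a - b) = intertwiner x y (a - b) *m lax0 x.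
Proof. by move=> den_neq0; lax_expand; move: den_neq0; unfold_map => ?; field. Qed.

Lemma Ru_add_Rv a b x y : Ru a b x y + Rv a b x y = x + y.
Proof. by apply: vecP; rewrite !coD; unfold_map; ring. Qed.

Lemma denC x y q : den x y q = den y x q.
Proof. by rewrite /den [x + y]addrC. Qed.

Lemma Rv_Ru a b x y : Rv a b x y = Ru a b y x.
Proof.
by apply: vecP; rewrite /Rv /Ru /rhat /khat /= [den y x _]denC; unfold_map; ring.
Qed.

Lemma Rv_intertwine a b x y : den x y (a - b) != 0 ->
  lax0 (Rv a b x y) *m intertwiner x y (a - b) = intertwiner x y (a - b) *m lax0 y.
Proof. by rewrite Rv_Ru intertwinerC denC => /Ru_intertwine. Qed.

Lemma mink_Ru a b x y : den x y (a - b) != 0 ->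
  mink (Ru a b x y) (Ru a b x y) = mink x x.
Proof.
move=> den_neq0; have intertw := Ru_intertwine den_neq0.
have : lax0 (Ru a b x y) *m lax0 (Ru a b x y) *m intertwiner x y (a - b)
     = intertwiner x y (a - b) *m (lax0 x *m lax0 x).
  by rewrite -mulmxA intertw mulmxA intertw mulmxA.
rewrite !lax0_sqr scalar_mxC.
by move/(intertwiner_cancel den_neq0); rewrite !scalar_mx2 => /mx2_inj[[]].
Qed.

Lemma mink_Rv a b x y : den x y (a - b) != 0 ->
  mink (Rv a b x y) (Rv a b x y) = mink y y.
Proof. by rewrite Rv_Ru denC; exact: mink_Ru. Qed.

Lemma lax0_Ru_Rv a b x y : den x y (a - b) != 0 ->
  lax0 (Ru a b x y) *m (lax0 (Rv a b x y) + (Complex 0 (a - b))%:M)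
  = (lax0 y + (Complex 0 (a - b))%:M) *m lax0 x.
Proof.
move=> den_neq0; apply: intertwiner_swap_left.
- by rewrite -!lax0D Ru_add_Rv.
- exact: Ru_intertwine.
- by rewrite !lax0_sqr mink_Ru.
Qed.

Lemma lax0_Rv_Ru a b x y : den x y (a - b) != 0 ->
  (lax0 (Rv a b x y) - (Complex 0 (a - b))%:M) *m lax0 (Ru a b x y)
  = lax0 x *m (lax0 y - (Complex 0 (a - b))%:M).
Proof.
move=> den_neq0; apply: intertwiner_swap_right.
- by rewrite -!lax0D Ru_add_Rv.
- exact: Rv_intertwine.
- by rewrite !lax0_sqr mink_Rv.
Qed.

Lemma Lax_Ru_Rv a b x y (zeta : C) : den x y (a - b) != 0 ->
  Lax (Ru a b x y) a zeta *m Lax (Rv a b x y) b zeta = Lax y b zeta *m Lax x a zeta.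
Proof.
move=> den_neq0; rewrite !Lax_lax0; apply: lax_product_reduction.
  by rewrite -!lax0D Ru_add_Rv.
have -> : zeta - Complex 0 b - (zeta - Complex 0 a) = Complex 0 (a - b).
  by case: zeta => *; simpc; congr Complex; ring.
exact: lax0_Ru_Rv.
Qed.

Lemma mink_genE x y : mink_gen x y = mink x y. Proof. by []. Qed.
Lemma den_genE x y q : den_gen x y q = den x y q. Proof. by []. Qed.
Lemma rhat_cross_gen x y q : rhat x y q = (den x y q)^-1 *: cross_gen x y.
Proof. by []. Qed.

Lemma Ru_numRu a b x y : den x y (a - b) != 0 ->
  Ru a b x y = (den x y (a - b))^-1 *: numRu_gen x y (a - b).
Proof.
move=> den_neq0; rewrite /Ru /= rhat_cross_gen /numRu_gen !mink_genE den_genE.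
rewrite !scalerDr !scalerA; congr (_ *: _ + _ *: _ + _ *: _).
- by rewrite /khat mulrC.
- by rewrite /khat denC; field.
- by rewrite mulrC.
Qed.

Lemma den_Ru_inv a b x y : den x y (a - b) != 0 ->
  den (Ru a b x y) (- y) (a - b) * den x y (a - b) = den_inv_gen x y (a - b).
Proof.
by rewrite /den_inv_gen !mink_genE => den_neq0; move: den_neq0; unfold_map => ?; field.
Qed.

Lemma Ru_inv_intertwine a b x y : den x y (a - b) != 0 ->
  lax0 x *m intertwiner (Ru a b x y) (- y) (a - b)
  = intertwiner (Ru a b x y) (- y) (a - b) *m lax0 (Ru a b x y).
Proof. by move=> den_neq0; lax_expand; move: den_neq0; unfold_map => ?; field. Qed.

Lemma Ru_inv a b x y : den x y (a - b) != 0 -> den_inv_gen x y (a - b) != 0 ->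
  den (Ru a b x y) (- y) (a - b) != 0 /\ Ru a b (Ru a b x y) (- y) = x.
Proof.
move=> den_neq0 inv_neq0.
have den'_neq0 : den (Ru a b x y) (- y) (a - b) != 0.
  by move: inv_neq0; rewrite -(den_Ru_inv den_neq0) mulf_eq0 negb_or => /andP[].
split=> //; apply: lax0_inj; apply: (intertwiner_cancel den'_neq0).
by rewrite [LHS](Ru_intertwine den'_neq0) [RHS](Ru_inv_intertwine den_neq0).
Qed.

Lemma exists_den_neq0 y q : exists x, den x y q != 0.
Proof.
exists (mkvec 1 0 0 - y); rewrite /den subrK /mink !co_mkvec0 !co_mkvec1 !co_mkvec2.
by apply: lt0r_neq0; nra.
Qed.

Lemma exists_den_inv_neq0 y q : exists x, den_inv_gen x y q != 0.
Proof.
rewrite /den_inv_gen; have [eq0|neq0] := eqVneq (mink y y + q ^+ 2) 0.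
  exists (mkvec 1 0 0); rewrite !mink_genE /mink !co_mkvec0 !co_mkvec1 !co_mkvec2.
  have -> : 1 * 1 - 0 * 0 - 0 * 0 - mink y y - q ^+ 2 = 1 - (mink y y + q ^+ 2) by ring.
  by rewrite eq0 subr0; apply: lt0r_neq0; nra.
exists 0; rewrite !mink_genE /mink /co !mxE.
have -> : (0 * 0 - 0 * 0 - 0 * 0 - mink y y - q ^+ 2) ^+ 2 + 4 * q ^+ 2 * (0 * 0 - 0 * 0 - 0 * 0)
   = (mink y y + q ^+ 2) ^+ 2 :> R by ring.
by rewrite expf_neq0.
Qed.

End Refactorisation.

Section YangBaxter.
Variables (R : rcfType) (a b c : R) (x y z : vec R).

Local Notation x1 := (Ru a b x y).
Local Notation y1 := (Rv a b x y).
Local Notation z1 := (Rv a c x1 z).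
Local Notation y1' := (Ru b c y z).
Local Notation z1' := (Rv b c y z).
Local Notation x1' := (Ru a c x z1').

Hypotheses (d1 : den x y (a - b) != 0) (d2 : den x1 z (a - c) != 0)
  (d3 : den y1 z1 (b - c) != 0) (d4 : den y z (b - c) != 0)
  (d5 : den x z1' (a - c) != 0) (d6 : den x1' y1' (a - b) != 0).

Let q_bc : Complex 0 (b - c) = Complex 0 (a - c) - Complex 0 (a - b) :> R[i].
Proof. by simpc; congr Complex; ring. Qed.

Lemma intertwiners_x :
  intertwiner x1 z (a - c) *m intertwiner x y (a - b)
  = intertwiner x1' y1' (a - b) *m intertwiner x z1' (a - c).
Proof.
apply: yb_intertwiners_left.
- by rewrite -!lax0D Ru_add_Rv.
- exact: Ru_intertwine.
- exact: Ru_intertwine.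
- by rewrite -q_bc; exact: lax0_Ru_Rv.
Qed.

Lemma intertwiners_z :
  intertwiner y1 z1 (b - c) *m intertwiner x1 z (a - c)
  = intertwiner x z1' (a - c) *m intertwiner y z (b - c).
Proof.
rewrite /intertwiner q_bc; apply: yb_intertwiners_right.
- by rewrite -!lax0D Ru_add_Rv.
- exact: Rv_intertwine.
- by rewrite -q_bc; exact: Rv_intertwine.
- exact: lax0_Rv_Ru.
Qed.

(* A [rewrite] here would test the two sides for convertibility, unfolding the
   rational expressions: hopelessly slow.  Hence the proofs close with [exact]. *)
Lemma YB_x : Ru a c x1 z = Ru a b x1' y1'.
Proof.
apply: lax0_inj; apply: (intertwiner_cancel d2); apply: (intertwiner_cancel d1).
rewrite -[LHS]mulmxA -[RHS]mulmxA.
exact: intertwine_mulmx_eq (Ru_intertwine d1) (Ru_intertwine d2)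
  (Ru_intertwine d5) (Ru_intertwine d6) intertwiners_x.
Qed.

Lemma YB_z : Rv b c y1 z1 = Rv a c x z1'.
Proof.
apply: lax0_inj; apply: (intertwiner_cancel d3); apply: (intertwiner_cancel d2).
rewrite -[LHS]mulmxA -[RHS]mulmxA.
exact: intertwine_mulmx_eq (Rv_intertwine d2) (Rv_intertwine d3)
  (Rv_intertwine d4) (Rv_intertwine d5) intertwiners_z.
Qed.

Lemma YB_y : Ru b c y1 z1 = Rv a b x1' y1'.
Proof.
have sum_lhs : Ru a c x1 z + Ru b c y1 z1 + Rv b c y1 z1 = x + y + z.
  by rewrite -addrA Ru_add_Rv addrCA Ru_add_Rv addrA [y1 + x1]addrC Ru_add_Rv.
have sum_rhs : Ru a b x1' y1' + Rv a b x1' y1' + Rv a c x z1' = x + y + z.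
  by rewrite Ru_add_Rv -addrA addrCA Ru_add_Rv addrCA Ru_add_Rv addrA.
by move: sum_lhs; rewrite -sum_rhs YB_x YB_z => /addIr /addrI.
Qed.

End YangBaxter.

Lemma Rhat_YB (R : rcfType) : YB_where_defined R.
Proof.
move=> a b c x y z; rewrite /Rhat /Rdef /= => d1 d2 d3 d4 d5 d6.
by apply: (f_equal3 (fun u v w => (u, v, w))); [exact: YB_x | exact: YB_y | exact: YB_z].
Qed.

Lemma birational_eq (R : rcfType) (f g : vec R -> vec R) :
  f =1 g -> birational f -> birational g.
Proof.
move=> eq_fg [F [G [h1 [h2 [h1_neq0 [h2_neq0 [Ff Gg]]]]]]].
exists F, G, h1, h2; do 3!split=> //.
by move=> x /Ff; rewrite eq_fg.
Qed.

Section Birational.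
Variable R : rcfType.
Implicit Types (a b q : R) (x y : vec R).
Local Notation P := {mpoly R[3]}.

Definition Xvec : 'rV[P]_3 := \row_i 'X_i.
Definition Cvec y : 'rV[P]_3 := map_mx (fun c => c%:MP) y.

Lemma map_meval_Xvec x : map_mx (meval (ptv x)) Xvec = x.
Proof. by apply/rowP => i; rewrite !mxE mevalXU. Qed.

Lemma map_meval_Cvec x y : map_mx (meval (ptv x)) (Cvec y) = y.
Proof. by apply/rowP => i; rewrite !mxE /= mevalC. Qed.

Lemma meval_den_gen x y q : (den_gen Xvec (Cvec y) q%:MP).@[ptv x] = den x y q.
Proof. by rewrite rmorph_den_gen map_meval_Xvec map_meval_Cvec /= mevalC. Qed.

Lemma meval_den_inv_gen x y q :
  (den_inv_gen Xvec (Cvec y) q%:MP).@[ptv x] = den_inv_gen x y q.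
Proof. by rewrite rmorph_den_inv_gen map_meval_Xvec map_meval_Cvec /= mevalC. Qed.

Lemma meval_numRu_gen x y q i :
  (numRu_gen Xvec (Cvec y) q%:MP ord0 i).@[ptv x] = numRu_gen x y q ord0 i.
Proof.
have := congr1 (fun M : 'rV[R]_3 => M ord0 i)
  (map_numRu_gen (meval (ptv x)) Xvec (Cvec y) q%:MP).
by rewrite /= mxE map_meval_Xvec map_meval_Cvec /= mevalC.
Qed.

Definition Ru_ratmap a b y : ratmap R :=
  RatMap (fun i => numRu_gen Xvec (Cvec y) (a - b)%:MP ord0 i)
         (fun=> den_gen Xvec (Cvec y) (a - b)%:MP).

Definition Ru_locus a b y : P :=
  den_gen Xvec (Cvec y) (a - b)%:MP * den_inv_gen Xvec (Cvec y) (a - b)%:MP.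

Lemma Ru_ratmapE a b y x : den x y (a - b) != 0 ->
  ratdef (Ru_ratmap a b y) x /\ rateval (Ru_ratmap a b y) x = Ru a b x y.
Proof.
move=> den_neq0; split=> [i|]; first by rewrite /= meval_den_gen.
rewrite (Ru_numRu den_neq0); apply/rowP => i.
by rewrite /rateval [LHS]mxE [RHS]mxE /= meval_numRu_gen meval_den_gen mulrC.
Qed.

Lemma meval_Ru_locus a b y x :
  (Ru_locus a b y).@[ptv x] = den x y (a - b) * den_inv_gen x y (a - b).
Proof. by rewrite mevalM meval_den_gen meval_den_inv_gen. Qed.

Lemma Ru_locus_neq0 a b y : Ru_locus a b y != 0.
Proof.
have [x den_neq0] := exists_den_neq0 y (a - b).
have [x' inv_neq0] := exists_den_inv_neq0 y (a - b).
rewrite mulf_neq0 //.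
  apply: contraNneq den_neq0 => /(congr1 (meval (ptv x))).
  by rewrite meval_den_gen meval0 => ->.
apply: contraNneq inv_neq0 => /(congr1 (meval (ptv x'))).
by rewrite meval_den_inv_gen meval0 => ->.
Qed.

Lemma birational_Ru a b y : birational (fun x => Ru a b x y).
Proof.
exists (Ru_ratmap a b y), (Ru_ratmap a b (- y)), (Ru_locus a b y), (Ru_locus a b (- y)).
split; first exact: Ru_locus_neq0.
split; first exact: Ru_locus_neq0.
split.
- move=> x; rewrite meval_Ru_locus mulf_eq0 negb_or => /andP[den_neq0 inv_neq0].
  have [den'_neq0 Ru_invK] := Ru_inv den_neq0 inv_neq0.
  have [def_x eval_x] := Ru_ratmapE den_neq0.
  have [def_u eval_u] := Ru_ratmapE den'_neq0.
  by split; [exact: def_x | exact: eval_x | exact: def_u | exact: etrans eval_u Ru_invK].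
- move=> w; rewrite meval_Ru_locus mulf_eq0 negb_or => /andP[den_neq0 inv_neq0].
  have [den'_neq0 Ru_invK] := Ru_inv den_neq0 inv_neq0.
  rewrite opprK in den'_neq0 Ru_invK.
  have [def_w eval_w] := Ru_ratmapE den_neq0.
  have [def_u eval_u] := Ru_ratmapE den'_neq0.
  split; [exact: def_w | rewrite eval_w; exact: def_u |].
  exact: etrans (congr1 (rateval (Ru_ratmap a b y)) eval_w) (etrans eval_u Ru_invK).
Qed.

Lemma quadrirational_Rhat : quadrirational R.
Proof.
move=> a b; split=> [y|x]; first exact: birational_Ru.
by apply: birational_eq (birational_Ru a b x) => y; rewrite Rv_Ru.
Qed.

End Birational.

Theorem theorem4p1 (R : rcfType) :
  YB_where_defined R /\ quadrirational R /\
  (forall (a b : R) (x y : vec R), den x y (a - b) != 0 ->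
     let u := Ru a b x y in
     let v := Rv a b x y in
     [/\ u + v = x + y, mink u u = mink x x, mink v v = mink y y &
         forall zeta : R[i],
           Lax u a zeta *m Lax v b zeta = Lax y b zeta *m Lax x a zeta]).
Proof.
split; first exact: Rhat_YB.
split; first exact: quadrirational_Rhat.
move=> a b x y den_neq0 /=; split.
- exact: Ru_add_Rv.
- exact: mink_Ru.
- exact: mink_Rv.
- by move=> zeta; exact: Lax_Ru_Rv.
Qed.
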